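(* For $\mathcal O\subseteq\mathbb F$, the family $\mathrm{UP}(\mathcal O)\setminus\mathrm{EX}(\mathcal O)$ is the set of the cores of the minimal elements of $\mathcal O$.
   Context: Fix a type $\sigma$; $\sigma$-structures are finite sets with an $r$-ary relation for each relation symbol of arity $r$, homomorphisms are relation-preserving maps, $\mathbf A\to\mathbf B$ means one exists. $\mathbb F$ is the set of isomorphism classes of $\sigma$-forests (structures whose incidence multigraph — bipartite with parts the vertices and the blocks $(R,(x_1,\dots,x_r))$, $(x_1,\dots,x_r)\in R(\mathbf A)$, an edge from $x_i$ to the block for each $i$ — has no cycles or parallel edges). The core of $\mathbf A$ is a homomorphically equivalent structure with the minimum number of vertices (unique up to isomorphism). $\mathbf A$ is minimal in $\mathcal O$ if $\mathbf A\in\mathcal O$ and for all $\mathbf C\in\mathcal O$ with $\mathbf C\to\mathbf A$ we have $\mathbf A\to\mathbf C$. A homomorphism $h:\mathbf A\to\mathbf B$ is a retraction if there is a homomorphism $g:\mathbf B\to\mathbf A$ with $h\circ g=\mathrm{id}_{\mathbf B}$, otherwise a non-retraction. $\mathrm{UP}(\mathcal O)=\{\mathbf A\in\mathbb F:\exists\mathbf T\in\mathcal O,\ \mathbf T\to\mathbf A\}$ and $\mathrm{EX}(\mathcal O)=\{\mathbf A\in\mathbb F:\exists\mathbf T\in\mathcal O$ and a non-retraction $h:\mathbf T\to\mathbf A\}$. *)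

From mathcomp Require Import all_boot.
Set Implicit Arguments. Unset Strict Implicit. Unset Printing Implicit Defensive.

Section SigmaStructures.
Variables (sig : finType) (ar : sig -> nat).

Record structure := mkStr {
  carrier : finType;
  rel_of : forall s : sig, {set (ar s).-tuple carrier}
}.

Definition is_hom (A B : structure) (f : carrier A -> carrier B) : Prop :=
  forall (s : sig) (t : (ar s).-tuple (carrier A)),
    t \in rel_of A s -> map_tuple f t \in rel_of B s.

Definition hom (A B : structure) : Prop := exists f, @is_hom A B f.

Definition hom_equiv (A B : structure) : Prop := hom A B /\ hom B A.

Definition is_core_of (C A : structure) : Prop :=
  hom_equiv C A /\
  forall B : structure, hom_equiv B A -> #|carrier C| <= #|carrier B|.

(* Nodes of the incidence multigraph: vertices and (potential) blocks. *)
Definition inode (A : structure) : finType :=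
  (carrier A + {s : sig & (ar s).-tuple (carrier A)})%type.

Definition iadj (A : structure) : rel (inode A) := fun u v =>
  match u, v with
  | inl x, inr b => (tagged b \in rel_of A (tag b)) && (x \in val (tagged b))
  | inr b, inl x => (tagged b \in rel_of A (tag b)) && (x \in val (tagged b))
  | _, _ => false
  end.

(* Forest: no parallel edges (each tuple has pairwise distinct entries) and
   no cycle in the incidence graph. *)
Definition is_forest (A : structure) : Prop :=
  (forall (s : sig) (t : (ar s).-tuple (carrier A)),
      t \in rel_of A s -> uniq (val t)) /\
  ~ (exists p : seq (inode A), [/\ 3 <= size p, uniq p & cycle (@iadj A) p]).

Definition retraction (A B : structure) (h : carrier A -> carrier B) : Prop :=
  exists g : carrier B -> carrier A, @is_hom B A g /\ forall y, h (g y) = y.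

Definition UP (O : structure -> Prop) (A : structure) : Prop :=
  is_forest A /\ exists T, O T /\ hom T A.

Definition EX (O : structure -> Prop) (A : structure) : Prop :=
  is_forest A /\
  exists T (h : carrier T -> carrier A),
    [/\ O T, @is_hom T A h & ~ retraction h].

Definition minimal_in (O : structure -> Prop) (A : structure) : Prop :=
  O A /\ forall C, O C -> hom C A -> hom A C.

End SigmaStructures.

From mathcomp Require Import all_boot.
From mathcomp Require Import fingroup perm.
From Stdlib Require Import Classical.
Set Implicit Arguments. Unset Strict Implicit.

(* If A is a forest in UP(O) \ EX(O), then every homomorphism from a member of
   O into A is a retraction.  A retraction h : T -> A with section g makes T
   minimal (any C -> T composed with h retracts, giving A -> C, hence T -> C)
   and A a core of T (for B equivalent to A, retracting T -> A -> B -> A -> T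
   -> A shows that B maps onto A).  Conversely, let A be a core of a minimal M.
   Endomorphisms of a core are injective, so A embeds into the forest M.  Given
   h : T -> A with T in O, minimality yields k : A -> T; then h o k is an
   injective, hence bijective, endomorphism of the finite set A, some iterate
   of it is the identity, and this provides a section of h. *)

Section Homomorphisms.
Variables (sig : finType) (ar : sig -> nat).
Implicit Types A B C T : structure ar.

Lemma is_hom_comp A B C (f : carrier A -> carrier B) (g : carrier B -> carrier C) :
  is_hom f -> is_hom g -> is_hom (g \o f).
Proof.
move=> hf hg s t tA.
have -> : map_tuple (g \o f) t = map_tuple g (map_tuple f t).
  by apply: val_inj; rewrite /= map_comp.
exact/hg/hf.
Qed.

Lemma hom_trans A B C : hom A B -> hom B C -> hom A C.
Proof. by move=> [f hf] [g hg]; exists (g \o f); apply: is_hom_comp. Qed.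

Lemma is_hom_iter A (e : carrier A -> carrier A) n :
  is_hom e -> is_hom (iter n e).
Proof.
move=> he; elim: n => [|n IHn] s t tA /=.
  by have -> : map_tuple (iter 0 e) t = t by apply: val_inj; rewrite /= map_id.
have -> : map_tuple (fun x => e (iter n e x)) t = map_tuple e (map_tuple (iter n e) t).
  by apply: val_inj; rewrite /= -map_comp.
exact/he/IHn.
Qed.

Lemma retraction_is_hom A B (h : carrier A -> carrier B) :
  retraction h -> hom B A.
Proof. by move=> [g [hg _]]; exists g. Qed.

End Homomorphisms.

Lemma iter_inj_id (T : finType) (e : T -> T) :
  injective e -> exists n, forall x, iter n.+1 e x = x.
Proof.
move=> e_inj; pose P := perm e_inj.
have iterE j x : iter j e x = (P ^+ j)%g x.
  by rewrite permX; elim: j => //= j ->; rewrite permE.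
by exists #[P]%g.-1 => x; rewrite iterE prednK ?order_gt0 // expg_order perm1.
Qed.

Section Cores.
Variables (sig : finType) (ar : sig -> nat).
Implicit Types A B M T : structure ar.

Lemma retraction_of_inj_comp A T (h : carrier T -> carrier A) (k : carrier A -> carrier T) :
  is_hom h -> is_hom k -> injective (h \o k) -> retraction h.
Proof.
move=> hh hk /iter_inj_id [n hkn].
exists (k \o iter n (h \o k)); split; first exact/is_hom_comp/hk/is_hom_iter/is_hom_comp.
exact: hkn.
Qed.

Definition image_str A (e : carrier A -> carrier A) : structure ar :=
  @mkStr sig ar {x : carrier A | x \in codom e}
    (fun s => [set t : (ar s).-tuple _ | map_tuple val t \in rel_of A s]).

(* The image of an endomorphism is an equivalent substructure, so by
   minimality of the core it is everything. *)
Lemma core_endo_inj A M (e : carrier A -> carrier A) :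
  is_core_of A M -> is_hom e -> injective e.
Proof.
move=> [[hAM hMA] A_min] he.
pose onto_image x : carrier (image_str e) := exist _ (e x) (codom_f e x).
have hval : @is_hom _ _ (image_str e) A val by move=> s t; rewrite inE.
have honto : is_hom onto_image.
  move=> s t tA; rewrite inE.
  have -> : map_tuple val (map_tuple onto_image t) = map_tuple e t.
    by apply: val_inj; rewrite /= -map_comp.
  exact: he.
have /A_min : hom_equiv (image_str e) M.
  split; first by apply: hom_trans hAM; exists val.
  by apply: hom_trans hMA _; exists onto_image.
rewrite /= card_sig => card_le.
have card_codom : #|codom e| == #|carrier A|.
  rewrite eqn_leq leq_image_card /=.
  by apply: leq_trans card_le _; apply: subset_leq_card; apply/subsetP => x; rewrite !inE.
by move=> x y; move/image_injP: card_codom; apply.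
Qed.

Lemma core_of_retractions A T (h : carrier T -> carrier A) :
  is_hom h -> (forall h' : carrier T -> carrier A, is_hom h' -> retraction h') ->
  is_core_of A T.
Proof.
move=> hh all_retr; have [g [hg _]] := all_retr h hh.
split; first by split; [exists g | exists h].
move=> B [[b hb] [b' hb']].
pose p := h \o b \o b' \o g \o h.
have hp : is_hom p by do 4!apply: is_hom_comp => //.
have [q [_ pqK]] := all_retr p hp.
pose s y := b' (g (h (q y))).
have s_inj : injective s by apply: (can_inj (g := h \o b)) => y; exact: pqK.
exact: leq_card s_inj.
Qed.

Definition inode_map A M (f : carrier A -> carrier M) (u : inode A) : inode M :=
  match u with
  | inl x => inl (f x)
  | inr b => inr (Tagged (fun s => (ar s).-tuple (carrier M)) (map_tuple f (tagged b)))
  end.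

Lemma inode_map_inj A M (f : carrier A -> carrier M) :
  injective f -> injective (inode_map f).
Proof.
move=> f_inj [x|[s t]] [y|[s' t']] //=; first by case=> /f_inj ->.
move=> eq_b.
have es : s = s'.
  by move: eq_b => /(congr1 (fun u : inode M => if u is inr b then tag b else s)).
have emap : map f t = map f t'.
  by move: eq_b => /(congr1 (fun u : inode M => if u is inr b then val (tagged b) else [::])).
by subst s'; congr inr; congr existT; apply/val_inj/(inj_map f_inj).
Qed.

Lemma is_forest_inj_hom A M (f : carrier A -> carrier M) :
  is_forest M -> is_hom f -> injective f -> is_forest A.
Proof.
move=> [M_uniq M_acyclic] hf f_inj; split.
  by move=> s t tA; have /= /map_uniq := M_uniq _ _ (hf _ _ tA).
move=> [p [size_p uniq_p cycle_p]]; apply: M_acyclic.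
exists (map (inode_map f) p); split.
- by rewrite size_map.
- by rewrite (map_inj_uniq (inode_map_inj f_inj)).
- rewrite cycle_map; apply: sub_cycle cycle_p => u v.
  by case: u => [x|[s t]]; case: v => [y|[s' t']] //= /andP [tR xt];
    rewrite hf //= map_f.
Qed.

End Cores.

Theorem proposition6p2 (sig : finType) (ar : sig -> nat)
    (O : structure ar -> Prop) :
  (forall T, O T -> is_forest T) ->
  forall A : structure ar,
    (UP O A /\ ~ EX O A) <-> (exists M, minimal_in O M /\ is_core_of A M).
Proof.
move=> O_forest A; split.
- move=> [[A_forest [T [OT [h hh]]]] notEX].
  have all_retr T' : O T' -> forall h' : carrier T' -> carrier A, is_hom h' -> retraction h'.
    move=> OT' h' hh'; apply: NNPP => not_retr; apply: notEX.
    by split; last exists T', h'.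
  exists T; split; last exact: core_of_retractions hh (all_retr T OT).
  split=> // C OC [c hc].
  have /retraction_is_hom CA := all_retr _ OC _ (is_hom_comp hc hh).
  by apply: hom_trans CA; exists h.
- move=> [M [[OM M_min] A_core]].
  have [[[f hf] [k hk]] _] := A_core.
  have f_inj : injective f.
    by move=> x y /(congr1 k) /(core_endo_inj A_core (is_hom_comp hf hk)).
  have A_forest := is_forest_inj_hom (O_forest _ OM) hf f_inj.
  split; first by split=> //; exists M; split=> //; exists k.
  move=> [_ [T [h [OT hh not_retr]]]]; apply: not_retr.
  have [m hm] := M_min T OT (hom_trans (ex_intro _ h hh) (ex_intro _ f hf)).
  have hmf := is_hom_comp hf hm.
  exact: retraction_of_inj_comp hh hmf (core_endo_inj A_core (is_hom_comp hmf hh)).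
Qed.
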